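(* Let $\mathcal{P}$ be a hereditary property of ordered graphs, and let $k,M \geqslant 0$ be integers. Suppose that for every $G \in \mathcal{P}$, the homogeneous block sequence $t_1\geqslant t_2\geqslant\dots$ of $G$ satisfies $\sum_{i = k+2}^\infty t_i \leqslant M$. Then $|\mathcal{P}_n| = O(n^k)$ as $n\to\infty$.
   Context: Ordered graphs of order $n$ have vertex set $[n]$ with the natural order; a hereditary property is a collection of ordered graphs closed under order-preserving isomorphism and induced ordered subgraphs; $\mathcal{P}_n$ is the set of members with vertex set $[n]$. A homogeneous block of $G$ is a maximal set $B$ of consecutive vertices such that $\Gamma(x)\setminus\{y\}=\Gamma(y)\setminus\{x\}$ for all $x,y\in B$ ($\Gamma$ denoting neighbourhood); these partition $V(G)$ uniquely. The homogeneous block sequence of $G$ is $t_1\geqslant t_2\geqslant\dots$, the orders of the homogeneous blocks of $G$ in non-increasing order, with $t_i=0$ for $i$ larger than the number of blocks. *)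

From mathcomp Require Import all_boot.
Set Implicit Arguments. Unset Strict Implicit. Unset Printing Implicit Defensive.

(* An ordered graph of order n: vertex set 'I_n = {0,...,n-1} (the natural order),
   edges are 2-element subsets of 'I_n. *)
Definition ograph (n : nat) := {set {set 'I_n}}.

Definition is_ograph n (E : ograph n) : bool := [forall e in E, #|e| == 2].

Definition adj n (E : ograph n) (x y : 'I_n) : bool := [set x; y] \in E.

Definition nbhd n (E : ograph n) (x : 'I_n) : {set 'I_n} := [set y | adj E x y].

Definition twins n (E : ograph n) (x y : 'I_n) : bool :=
  nbhd E x :\ y == nbhd E y :\ x.

Definition consecutive n (B : {set 'I_n}) : bool :=
  [forall x in B, forall z in B, forall y : 'I_n,
     ((x <= y)%N && (y <= z)%N) ==> (y \in B)].

Definition twin_set n (E : ograph n) (B : {set 'I_n}) : bool :=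
  consecutive B && [forall x in B, forall y in B, twins E x y].

Definition homogeneous_block n (E : ograph n) (B : {set 'I_n}) : bool :=
  twin_set E B && [forall B' : {set 'I_n}, (twin_set E B' && (B \subset B')) ==> (B' == B)].

Definition blocks n (E : ograph n) : {set {set 'I_n}} := [set B | homogeneous_block E B].

(* homogeneous block sequence t_1 >= t_2 >= ... (finitely many nonzero terms) *)
Definition block_seq n (E : ograph n) : seq nat :=
  sort geq [seq #|(B : {set 'I_n})| | B in blocks E].

Definition induced m n (E : ograph n) (f : 'I_m -> 'I_n) : ograph m :=
  [set e : {set 'I_m} | (#|e| == 2) && (f @: e \in E)].

Definition hereditary (P : forall n, pred (ograph n)) : Prop :=
  forall m n (f : 'I_m -> 'I_n),
    (forall x y : 'I_m, (x < y)%N -> (f x < f y)%N) ->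
    forall E : ograph n, is_ograph E -> P n E -> P m (induced E f).

Definition Pn (P : forall n, pred (ograph n)) (n : nat) : {set ograph n} :=
  [set E : ograph n | is_ograph E && P n E].

From mathcomp Require Import all_boot zify.
Set Implicit Arguments. Unset Strict Implicit. Unset Printing Implicit Defensive.

(* Twinship is an equivalence relation, and the homogeneous blocks of an ordered graph are
   the intervals between consecutive block starts (vertices that are not twins of their
   predecessor).  Since adjacency only depends on twin classes, a graph is determined by its
   set S of block starts together with its restriction to S and the successors of S, which
   leaves at most 2^(2^(2|S|)) graphs per S.
   The hypothesis leaves at most k+1 blocks of size > M and at most (k+2)M vertices in
   smaller blocks, so |S| is bounded.  Call a start free if it is farther than R = (k+2)M
   from 0, from n and from the previous start.  Each free start follows a large block, and
   another large block comes after the last free start, so there are at most k free starts.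
   Every start is joined to 0, n or a free start by a chain of gaps of length at most R, so
   S lies within distance R|S| of at most k+2 points; this leaves O(n^k) choices for S. *)

Lemma leq_card_bigcup (I T : finType) (P : pred I) (F : I -> {set T}) :
  #|\bigcup_(i | P i) F i| <= \sum_(i | P i) #|F i|.
Proof.
apply: (big_ind2 (fun (X : {set T}) m => #|X| <= m)) => //; first by rewrite cards0.
move=> X1 m1 X2 m2 le1 le2; rewrite cardsU.
exact: leq_trans (leq_subr _ _) (leq_add le1 le2).
Qed.

Lemma leq_card_pairs (A B C : finType) (D : {set A}) (G : {set B}) (Y : B -> {set C})
    (h : A -> B * C) c :
  {in D &, injective h} -> (forall x, x \in D -> (h x).1 \in G /\ (h x).2 \in Y (h x).1) ->
  (forall b, b \in G -> #|Y b| <= c) -> #|D| <= #|G| * c.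
Proof.
move=> hinj hD Yc; rewrite -(card_in_imset hinj).
have sub : h @: D \subset \bigcup_(b in G) [set (b, y) | y in Y b].
  apply/subsetP => _ /imsetP[x /hD[hG hY] ->]; apply/bigcupP; exists (h x).1 => //.
  by apply/imsetP; exists (h x).2; last by case: (h x).
apply: leq_trans (subset_leq_card sub) _; apply: leq_trans (leq_card_bigcup _ _) _.
by rewrite -sum_nat_const; apply: leq_sum => b /Yc; apply: leq_trans (leq_imset_card _ _).
Qed.

Lemma card_small_sets (T : finType) k : #|[set A : {set T} | #|A| <= k]| <= #|T|.+1 ^ k.
Proof.
elim: k => [|k IH].
  rewrite expn0 -(cards1 (@set0 T)); apply/subset_leq_card/subsetP => A.
  by rewrite !inE leqn0 cards_eq0.
pose add (p : {set T} * option T) := if p.2 is Some x then x |: p.1 else p.1.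
have sub : [set A : {set T} | #|A| <= k.+1] \subset
    add @: setX [set A : {set T} | #|A| <= k] [set: option T].
  apply/subsetP => A; rewrite inE => Ak; apply/imsetP.
  have [->|[x xA]] := set_0Vmem A; first by exists (set0, None); rewrite // !inE cards0.
  exists (A :\ x, Some x); last by rewrite /add /= setD1K.
  by rewrite !inE andbT; move: Ak; rewrite (cardsD1 x) xA.
apply: leq_trans (subset_leq_card sub) _; apply: leq_trans (leq_imset_card _ _) _.
by rewrite cardsX cardsT card_option expnSr leq_mul2r IH orbT.
Qed.

Lemma card_ord_interval_le m (A : {pred 'I_m}) a L :
  {in A, forall x : 'I_m, a <= x < a + L} -> #|A| <= L.
Proof.
move=> AaL; rewrite cardE -(size_map val) -(size_iota a L); apply: uniq_leq_size.
  by rewrite (map_inj_uniq val_inj) enum_uniq.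
by move=> i /mapP[x]; rewrite mem_enum => /AaL + ->; rewrite mem_iota.
Qed.

Lemma card_ord_interval_ge m (A : {pred 'I_m}) a b :
  b < m -> (forall x : 'I_m, a <= x <= b -> x \in A) -> b.+1 - a <= #|A|.
Proof.
move=> bm abA; rewrite cardE -(size_map val) -(size_iota a (b.+1 - a)).
apply: uniq_leq_size; first exact: iota_uniq.
move=> i; rewrite mem_iota => ai; have im : i < m by lia.
by apply/mapP; exists (Ordinal im); rewrite // mem_enum abA //=; lia.
Qed.

Lemma count_gt_drop k M (t : seq nat) :
  sumn (drop k.+1 t) <= M -> count (leq M.+1) t <= k.+1.
Proof.
have countM s : count (leq M.+1) s * M.+1 <= sumn s.
  by elim: s => //= c s IH; case: (ltnP M c) => /= cM; lia.
rewrite -{2}(cat_take_drop k.+1 t) count_cat => dropM.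
have := count_size (leq M.+1) (take k.+1 t); rewrite size_take_min.
have := countM (drop k.+1 t); nia.
Qed.

Lemma sumn_filter_leq_drop k M (t : seq nat) :
  sumn (drop k.+1 t) <= M -> sumn [seq c <- t | c <= M] <= k.+2 * M.
Proof.
have sum_small s : sumn [seq c <- s | c <= M] <= size s * M.
  by elim: s => //= c s IH; case: (leqP c M) => /= cM; lia.
have sum_filter s : sumn [seq c <- s | c <= M] <= sumn s.
  by elim: s => //= c s IH; case: (leqP c M) => /= cM; lia.
rewrite -{2}(cat_take_drop k.+1 t) filter_cat sumn_cat => dropM.
have := sum_small (take k.+1 t); have := sum_filter (drop k.+1 t).
rewrite size_take_min; nia.
Qed.

Section Twins.
Variables (n : nat) (E : ograph n).
Hypothesis graphE : is_ograph E.

Lemma adjC x y : adj E x y = adj E y x.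
Proof. by rewrite /adj setUC. Qed.

Lemma adjxx x : adj E x x = false.
Proof.
apply/negbTE/negP => Exx.
by have /forall_inP/(_ _ Exx) := graphE; rewrite setUid cards1.
Qed.

Lemma twins_adj x y z : twins E x y -> z != x -> z != y -> adj E x z = adj E y z.
Proof. by move=> /eqP/setP/(_ z); rewrite !inE => + zx zy; rewrite zx zy. Qed.

Lemma twins_refl x : twins E x x.
Proof. exact: eqxx. Qed.

Lemma twins_sym x y : twins E x y = twins E y x.
Proof. by rewrite /twins eq_sym. Qed.

Lemma twins_trans y x z : twins E x y -> twins E y z -> twins E x z.
Proof.
move=> txy tyz; have [<-|xz] := eqVneq x z; first exact: twins_refl.
have [eyx|yx] := eqVneq y x; first by rewrite -eyx.
have [ezy|zy] := eqVneq z y; first by rewrite ezy.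
apply/eqP/setP => w; rewrite !inE.
have [->|wx] := eqVneq w x; first by rewrite adjxx andbF.
have [->|wz] := eqVneq w z; first by rewrite adjxx andbF.
have [->|wy] := eqVneq w y; last by rewrite (twins_adj txy) // (twins_adj tyz).
rewrite /=; have xy : x != y by rewrite eq_sym.
have zx : z != x by rewrite eq_sym.
by rewrite adjC (twins_adj tyz xy xz) adjC (twins_adj txy zx zy) adjC.
Qed.

Lemma adj_twins x y x' y' : twins E x x' -> twins E y y' -> x != y -> x' != y' ->
  adj E x y = adj E x' y'.
Proof.
move=> txx' tyy' xy x'y'.
have [eyx'|yx'] := eqVneq y x'.
  subst x'; have [<-|xy'] := eqVneq x y'; first exact: adjC.
  have yx : y != x by rewrite eq_sym.
  by rewrite (twins_adj (twins_trans txx' tyy') yx x'y') adjC.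
have yx : y != x by rewrite eq_sym.
have x'y : x' != y by rewrite eq_sym.
by rewrite (twins_adj txx' yx yx') adjC (twins_adj tyy' x'y x'y') adjC.
Qed.

End Twins.

Section Starts.
Variables (n : nat) (S : {set 'I_n.+1}).
Hypothesis S0 : ord0 \in S.

Definition start (x : 'I_n.+1) : 'I_n.+1 := [arg max_(s > ord0 | (s \in S) && (s <= x)) s].

Lemma startP (x : 'I_n.+1) :
  [/\ start x \in S, start x <= x & forall s, s \in S -> s <= x -> s <= start x].
Proof.
rewrite /start; case: arg_maxnP => [|s /andP[sS sx] smax]; first by rewrite S0.
by split=> // t tS tx; apply: smax; rewrite tS.
Qed.

Lemma start_id (s : 'I_n.+1) : s \in S -> start s = s.
Proof.
move=> sS; have [_ les smax] := startP s.
by apply/val_inj/eqP; rewrite eqn_leq les smax.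
Qed.

Lemma start_le (x y : 'I_n.+1) : x <= y -> start x <= start y.
Proof.
move=> xy; have [xS lex _] := startP x; have [_ _ ymax] := startP y.
by apply: ymax; rewrite // (leq_trans lex).
Qed.

Lemma start_between (x y z : 'I_n.+1) : x <= y <= z -> start x = start z -> start y = start x.
Proof.
move=> /andP[xy yz] exz; apply/val_inj/eqP.
by rewrite eqn_leq (start_le xy) andbT exz start_le.
Qed.

Lemma start_neq (x y : 'I_n.+1) : x <= y -> start x != start y -> x < start y.
Proof.
move=> xy; rewrite ltnNge; apply: contra => yx.
have [yS _ _] := startP y; have [_ _ xmax] := startP x.
by apply/eqP/val_inj/eqP; rewrite eqn_leq (start_le xy) xmax.
Qed.

Lemma start_ltn (s x y : 'I_n.+1) : s \in S -> x < s -> s <= y -> start x < start y.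
Proof.
move=> sS xs sy; have [_ lex _] := startP x; have [_ _ ymax] := startP y.
by apply: leq_ltn_trans lex (leq_trans xs (ymax s sS sy)).
Qed.

Definition start_class (v : 'I_n.+1) : {set 'I_n.+1} := [set y | start y == start v].

Lemma mem_start_class (v y : 'I_n.+1) : (y \in start_class v) = (start y == start v).
Proof. by rewrite inE. Qed.

Lemma start_class_eq (x y : 'I_n.+1) : start_class x = start_class y -> start x = start y.
Proof. by move/setP/(_ x); rewrite !mem_start_class eqxx => /esym/eqP. Qed.

(* A vertex of the class of y other than [start x]: the successor of the start when x and y
   share a class. *)
Definition partner (x y : 'I_n.+1) : 'I_n.+1 :=
  if start x == start y then inord (start x).+1 else start y.

Definition starts_succ : {set 'I_n.+1} := S :|: [set inord s.+1 | s : 'I_n.+1 in S].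

Lemma card_starts_succ : #|starts_succ| <= #|S|.*2.
Proof.
by rewrite cardsU -addnn; apply: leq_trans (leq_subr _ _) _; rewrite leq_add2l leq_imset_card.
Qed.

Lemma partnerP (x y : 'I_n.+1) :
  x != y -> start (partner x y) = start y /\ start x != partner x y.
Proof.
rewrite /partner => xy; have [exy|neq] := eqVneq (start x) (start y); last first.
  by have [yS _ _] := startP y; rewrite (start_id yS).
have [aS ax _] := startP x; have [_ ay _] := startP y.
set a := start x in exy aS ax ay *.
have [z az za] : exists2 z : 'I_n.+1, a < z & start z = a.
  have [xa|xa] := eqVneq x a; last by exists x; rewrite // ltn_neqAle ax eq_sym andbT.
  by exists y; rewrite ?exy // ltn_neqAle ay andbT -exy -xa.
have aE : (inord a.+1 : 'I_n.+1) = a.+1 :> nat by rewrite inordK //; have := ltn_ord z; lia.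
have eb : start (inord a.+1) = start a.
  by apply: (start_between (z := z)); rewrite ?aE ?(start_id aS) ?za //; lia.
split; first by rewrite eb (start_id aS).
by apply/eqP => /(congr1 (@nat_of_ord _)); rewrite aE; lia.
Qed.

Lemma rep_pair_sub (x y : 'I_n.+1) : [set start x; partner x y] \subset starts_succ.
Proof.
have [xS _ _] := startP x; have [yS _ _] := startP y.
apply/subsetP => z; rewrite !inE /partner => /orP[]/eqP ->; first by rewrite xS.
by case: eqP => _; rewrite ?yS // orbC; apply/orP; left; apply/imsetP; exists (start x).
Qed.

End Starts.

Lemma consecutive_mem n (B : {set 'I_n}) (a b c : 'I_n) :
  consecutive B -> a \in B -> b \in B -> a <= c <= b -> c \in B.
Proof.
move=> /forall_inP/(_ a) cB aB bB acb.
by move: (cB aB) => /forall_inP/(_ b bB)/forallP/(_ c); rewrite acb.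
Qed.

Definition block_starts n (E : ograph n.+1) : {set 'I_n.+1} :=
  [set x : 'I_n.+1 | [forall y : 'I_n.+1, (y.+1 == x :> nat) ==> ~~ twins E y x]].

Lemma block_starts0 n (E : ograph n.+1) : ord0 \in block_starts E.
Proof. by rewrite inE; apply/forallP. Qed.

Section BlockStarts.
Variables (n : nat) (E : ograph n.+1).
Hypothesis graphE : is_ograph E.
Local Notation S := (block_starts E).
Local Notation start := (start S).
Let S0 : ord0 \in S := block_starts0 E.

Lemma block_starts_twins (s p : 'I_n.+1) : s \in S -> p.+1 = s :> nat -> ~~ twins E p s.
Proof. by rewrite inE => /forallP/(_ p)/implyP + /eqP ps; apply. Qed.

Lemma twins_start (x y : 'I_n.+1) : start x = start y -> twins E x y.
Proof.
wlog xy : x y / x <= y.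
  move=> W; case: (leqP x y) => [xy|/ltnW yx] exy; first exact: W.
  by rewrite twins_sym; apply: W.
move=> exy; have [d] : exists d, y = x + d :> nat by exists (y - x); lia.
elim: d y xy exy => [|d IH] y xy exy yd.
  by rewrite (_ : y = x) ?twins_refl //; apply: val_inj => /=; rewrite yd addn0.
have ltyn := ltn_ord y.
pose y' : 'I_n.+1 := inord (x + d).
have y'E : y' = x + d :> nat by rewrite inordK; lia.
have ey' : start y' = start x by apply: (start_between S0 _ exy); lia.
apply: (twins_trans graphE (IH y' _ (esym ey') y'E)); first lia.
have yS : y \notin S.
  apply/negP => yS; have [_ sx _] := startP S0 x.
  by move: exy; rewrite (start_id S0 yS) => /(congr1 val) /=; lia.
move: yS; rewrite inE negb_forall => /existsP[z].
rewrite negb_imply negbK => /andP[/eqP zy tzy].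
by rewrite (_ : y' = z) //; apply: val_inj => /=; lia.
Qed.

Lemma twin_set_start B (a b : 'I_n.+1) :
  twin_set E B -> a \in B -> b \in B -> a <= b -> start a = start b.
Proof.
move=> /andP[cB /forall_inP twB] aB bB ab; apply/eqP; apply: contraT => neq.
have [sS sb _] := startP S0 b; have a_lt := start_neq S0 ab neq.
set s := start b in sS sb a_lt.
pose p : 'I_n.+1 := inord s.-1.
have pE : p = s.-1 :> nat by rewrite inordK //; have := ltn_ord s; lia.
have [pB sB] : p \in B /\ s \in B by split; apply: (consecutive_mem cB aB bB); lia.
have ps : p.+1 = s :> nat by lia.
case/negP: (block_starts_twins sS ps).
by move: (twB p pB) => /forall_inP/(_ s sB).
Qed.

Lemma start_class_block v : homogeneous_block E (start_class S v).
Proof.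
rewrite /start_class; set B := [set y | _].
have twB : twin_set E B.
  apply/andP; split; apply/forall_inP => x; rewrite inE => /eqP xv.
    apply/forall_inP => z; rewrite inE => /eqP zv; apply/forallP => y.
    by apply/implyP => xyz; rewrite inE (start_between S0 xyz) ?xv // zv.
  by apply/forall_inP => y; rewrite inE => /eqP yv; apply: twins_start; rewrite xv.
rewrite /homogeneous_block twB; apply/forallP => B'; apply/implyP => /andP[twB' BB'].
rewrite eqEsubset BB' andbT; apply/subsetP => y yB'; rewrite inE.
have vB' : v \in B' by apply: (subsetP BB'); rewrite inE.
by case: (leqP v y) => [|/ltnW] vy; rewrite (twin_set_start twB' _ _ vy).
Qed.

Lemma adj_rep_pair x y : x != y -> adj E x y = ([set start x; partner S x y] \in E).
Proof.
move=> xy; have [sp neq] := partnerP S0 xy; have [xS _ _] := startP S0 x.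
have tx : twins E x (start x) by apply: twins_start; rewrite (start_id S0 xS).
have ty : twins E y (partner S x y) by apply: twins_start; rewrite sp.
by rewrite (adj_twins graphE tx ty xy neq).
Qed.

End BlockStarts.

Definition encode n (E : ograph n.+1) :=
  (block_starts E, E :&: powerset (starts_succ (block_starts E))).

Lemma encode_inj n (E1 E2 : ograph n.+1) :
  is_ograph E1 -> is_ograph E2 -> encode E1 = encode E2 -> E1 = E2.
Proof.
move=> graph1 graph2 [eS eK].
have adjE x y : x != y -> adj E1 x y = adj E2 x y.
  move=> xy; rewrite (adj_rep_pair graph1 xy) (adj_rep_pair graph2 xy) -eS.
  have sub := rep_pair_sub (block_starts0 E1) x y.
  move/setP: eK => /(_ [set start (block_starts E1) x; partner (block_starts E1) x y]).
  by rewrite !inE -eS sub !andbT.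
apply/setP => e; have [/cards2P[x [y [xy ->]]]|e2] := boolP (#|e| == 2); first exact: adjE.
have notin E : is_ograph E -> e \in E = false.
  by move=> /forall_inP graphE; apply/negbTE; apply: contra e2; apply: graphE.
by rewrite !notin.
Qed.

Lemma card_big_blocks n (E : ograph n) k M :
  sumn (drop k.+1 (block_seq E)) <= M -> #|[set B in blocks E | M < #|B|]| <= k.+1.
Proof.
move=> /count_gt_drop; apply: leq_trans; rewrite (permP (permEl (perm_sort _ _))).
rewrite -sum1_count big_image_cond -sum1_card.
by apply/eq_leq/eq_bigl => B; rewrite inE.
Qed.

Lemma sum_small_blocks n (E : ograph n) k M :
  sumn (drop k.+1 (block_seq E)) <= M -> \sum_(B in blocks E | #|B| <= M) #|B| <= k.+2 * M.
Proof.
move=> /sumn_filter_leq_drop; apply: leq_trans.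
by rewrite (perm_sumn (perm_filter _ (permEl (perm_sort _ _)))) sumnE big_filter big_image_cond.
Qed.

Definition near r (x y : nat) := (x <= y + r) && (y <= x + r).

Lemma near_refl r x : near r x x.
Proof. by rewrite /near leq_addr. Qed.

Lemma near_le r r' x y : r <= r' -> near r x y -> near r' x y.
Proof. by rewrite /near => rr' /andP[xy yx]; apply/andP; split; lia. Qed.

Lemma near_trans r1 r2 x y z : near r1 x y -> near r2 y z -> near (r1 + r2) x z.
Proof. by rewrite /near => /andP[xy yx] /andP[yz zy]; apply/andP; split; lia. Qed.

Section Anchors.
Variables (n : nat) (S : {set 'I_n.+1}) (R : nat).

Definition anchored (s : 'I_n.+1) :=
  [|| s <= R, n < s + R | [exists t in S, t < s <= t + R]].

Definition free_starts := [set s in S | ~~ anchored s].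

Definition neighbourhood (A : {set 'I_n.+1}) r :=
  [set x : 'I_n.+1 | [exists y in A, near r x y]].

Lemma card_neighbourhood A r : #|neighbourhood A r| <= #|A| * r.*2.+1.
Proof.
have sub : neighbourhood A r \subset \bigcup_(y in A) [set x : 'I_n.+1 | near r x y].
  apply/subsetP => x; rewrite /neighbourhood inE => /exists_inP[y yA xy].
  by apply/bigcupP; exists y; rewrite ?inE.
apply: leq_trans (subset_leq_card sub) _; apply: leq_trans (leq_card_bigcup _ _) _.
rewrite -sum_nat_const; apply: leq_sum => y _.
by apply: (card_ord_interval_le (a := y - r)) => x; rewrite inE => /andP[]; lia.
Qed.

Lemma starts_near_free b :
  #|S| <= b -> S \subset neighbourhood (ord0 |: (ord_max |: free_starts)) (R * b).
Proof.
pose before s := [set t in S | t <= s].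
move=> Sb; suff near_end m (s : 'I_n.+1) : s = m :> nat -> s \in S ->
    exists2 y, y \in ord0 |: (ord_max |: free_starts) & near (R * #|before s|) s y.
  apply/subsetP => s sS; have [y yA sy] := near_end _ s erefl sS.
  rewrite /neighbourhood inE; apply/exists_inP; exists y => //; apply: near_le sy.
  rewrite leq_mul2l (leq_trans _ Sb) ?orbT //.
  by apply/subset_leq_card/subsetP => t; rewrite inE => /andP[].
(* Follow the anchors backwards: each step moves by at most R and passes one more start. *)
elim/ltn_ind: m s => m IH s sm sS.
have before_s : 0 < #|before s| by apply/card_gt0P; exists s; rewrite inE sS /=.
have R_le : R <= R * #|before s| by rewrite leq_pmulr.
have [|free] := boolP (anchored s); last first.
  by exists s; [rewrite !inE sS free !orbT | exact: near_refl].
case/or3P => [sR|nsR|/exists_inP[t tS /andP[ts st]]].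
- exists ord0; first by rewrite !inE eqxx.
  by apply: near_le R_le _; apply/andP; split=> /=; lia.
- exists ord_max; first by rewrite !inE eqxx orbT.
  by apply: near_le R_le _; apply/andP; split=> /=; have := ltn_ord s; lia.
have tm : t < m by rewrite -sm.
have [y yA ty] := IH t tm t erefl tS.
have lt_ts : #|before t| < #|before s|.
  apply/proper_card/properP; split.
    by apply/subsetP => u; rewrite !inE => /andP[-> ut]; apply: leq_trans ut (ltnW ts).
  by exists s; rewrite !inE ?sS //= leqNgt ts.
exists y => //; apply: near_le (near_trans (_ : near R s t) ty).
  by rewrite -mulnS leq_mul2l lt_ts orbT.
by apply/andP; split; lia.
Qed.

End Anchors.

Lemma card_start_sets n k R b :
  #|[set S : {set 'I_n.+1} | (#|S| <= b) && (#|free_starts S R| <= k)]|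
    <= n.+2 ^ k * 2 ^ (k.+2 * (R * b).*2.+1).
Proof.
pose Y (A : {set 'I_n.+1}) := powerset (neighbourhood (ord0 |: (ord_max |: A)) (R * b)).
have Gk : #|[set A : {set 'I_n.+1} | #|A| <= k]| <= n.+2 ^ k.
  by have := card_small_sets 'I_n.+1 k; rewrite card_ord.
apply: leq_trans (leq_mul Gk (leqnn _)).
apply: (leq_card_pairs (h := fun S => (free_starts S R, S)) (Y := Y)).
- by move=> S1 S2 _ _ [].
- move=> S; rewrite /Y !inE => /andP[Sb freek]; split=> //.
  exact: starts_near_free.
- move=> A; rewrite inE => Ak; rewrite card_powerset leq_exp2l //.
  apply: leq_trans (card_neighbourhood _ _) _; rewrite leq_mul2r; apply/orP; right.
  by rewrite !cardsU1; case: (_ \in _); case: (_ \in _); lia.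
Qed.

Section BlockSizes.
Variables (n : nat) (E : ograph n.+1) (k M : nat).
Hypothesis graphE : is_ograph E.
Hypothesis blocksE : sumn (drop k.+1 (block_seq E)) <= M.
Local Notation S := (block_starts E).
Local Notation start := (start S).
Let S0 : ord0 \in S := block_starts0 E.
Local Notation part := (start_class S).

Lemma card_small_start_classes : #|[set v | #|part v| <= M]| <= k.+2 * M.
Proof.
apply: leq_trans (sum_small_blocks blocksE); apply: leq_trans (leq_card_bigcup _ _).
apply/subset_leq_card/subsetP => v; rewrite inE => small_v; apply/bigcupP.
by exists (part v); rewrite ?inE ?small_v ?andbT ?mem_start_class // (start_class_block graphE).
Qed.

Lemma card_block_starts : #|S| <= k.+1 + k.+2 * M.
Proof.
have sub : S \subset [set s in S | M < #|part s|] :|: [set v | #|part v| <= M].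
  by apply/subsetP => s; rewrite !inE => -> /=; rewrite ltnNge orNb.
apply: leq_trans (subset_leq_card sub) _; rewrite cardsU.
apply: leq_trans (leq_subr _ _) (leq_add _ card_small_start_classes).
apply: leq_trans (card_big_blocks blocksE); rewrite -(card_in_imset (f := part)).
  apply/subset_leq_card/subsetP => B /imsetP[s]; rewrite !inE => /andP[_ big_s] ->.
  by rewrite (start_class_block graphE).
move=> s t /setIdP[sS _] /setIdP[tS _] /start_class_eq.
by rewrite (start_id S0 sS) (start_id S0 tS).
Qed.

Local Notation R := (k.+2 * M).

Lemma free_startsP (s : 'I_n.+1) : s \in free_starts S R ->
  [/\ s \in S, R < s, s + R <= n & forall t, t \in S -> t < s -> t + R < s].
Proof.
move=> /setIdP[sS]; rewrite /anchored !negb_or negb_exists_in.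
move=> /and3P[Rs sRn /forall_inP far]; split=> //; first by rewrite ltnNge.
  by rewrite leqNgt.
by move=> t tS ts; move: (far t tS); rewrite ts /= -ltnNge.
Qed.

Lemma start_pred_ltn (s x : 'I_n.+1) :
  s \in free_starts S R -> s <= x -> start (inord s.-1) < start x.
Proof.
move=> /free_startsP[sS Rs _ _] sx; apply: (start_ltn S0 sS) sx.
by rewrite inordK //; have := ltn_ord s; lia.
Qed.

Lemma start_class_pred_big (s : 'I_n.+1) : s \in free_starts S R -> M < #|part (inord s.-1)|.
Proof.
move=> sF; have /free_startsP[sS Rs _ far] := sF.
set p : 'I_n.+1 := inord s.-1.
have pE : p = s.-1 :> nat by rewrite inordK //; have := ltn_ord s; lia.
have [tS tp _] := startP S0 p.
have far_p : start p + R < s by apply: far => //; lia.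
have MR : M <= R := leq_pmull _ (ltn0Sn _).
suff : p.+1 - start p <= #|part p| by lia.
apply: (card_ord_interval_ge (ltn_ord p)) => x /andP[px xp].
rewrite mem_start_class; apply/eqP.
by rewrite (start_between S0 (x := start p) (z := p)) ?px ?xp ?(start_id S0 tS).
Qed.

Lemma big_start_class_after (s : 'I_n.+1) : s \in free_starts S R ->
  exists2 v : 'I_n.+1, s <= v & M < #|part v|.
Proof.
move=> /free_startsP[_ _ sRn _].
suff : ~~ [forall v : 'I_n.+1, (s <= v) ==> (#|part v| <= M)].
  by rewrite negb_forall => /existsP[v]; rewrite negb_imply -ltnNge => /andP[]; exists v.
apply/negP => /forallP small; have := card_small_start_classes.
suff : n.+1 - s <= #|[set v | #|part v| <= M]| by lia.
apply: (card_ord_interval_ge (ltnSn n)) => x /andP[sx _].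
by rewrite inE; apply: (implyP (small x)).
Qed.

Lemma card_free_starts : #|free_starts S R| <= k.
Proof.
set F := free_starts S R.
have [->|[s0 s0F]] := set_0Vmem F; first by rewrite cards0.
have [ss ssF ssmax] : exists2 ss, ss \in F & forall s, s \in F -> s <= ss.
  by exists [arg max_(s > s0 in F) s]; case: arg_maxnP.
have [v ssv big_v] := big_start_class_after ssF.
set Big := [set B in blocks E | M < #|B|].
pose f (s : 'I_n.+1) := part (inord s.-1).
have sub : f @: F \subset Big :\ part v.
  apply/subsetP => B /imsetP[s sF ->].
  rewrite !inE (start_class_block graphE) (start_class_pred_big sF) !andbT.
  apply/negP => /eqP/start_class_eq e.
  by have := start_pred_ltn sF (leq_trans (ssmax s sF) ssv); rewrite e ltnn.
have inj : {in F &, injective f}.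
  have predE (t : 'I_n.+1) : t \in F -> (inord t.-1 : 'I_n.+1) = t.-1 :> nat.
    by move=> /free_startsP[_ Rt _ _]; rewrite inordK //; have := ltn_ord t; lia.
  move=> s t sF tF /start_class_eq e; apply: val_inj; case: (ltngtP s t) => // [st|ts].
    by have := start_pred_ltn sF (_ : s <= inord t.-1); rewrite e ltnn predE //; lia.
  by have := start_pred_ltn tF (_ : t <= inord s.-1); rewrite e ltnn predE //; lia.
rewrite -(card_in_imset inj); apply: leq_trans (subset_leq_card sub) _.
have := card_big_blocks blocksE; rewrite (cardsD1 (part v)) !inE (start_class_block graphE).
by rewrite big_v add1n ltnS.
Qed.

End BlockSizes.

Theorem lemma8 (P : forall n, pred (ograph n)) (k M : nat) :
  hereditary P ->
  (forall n (E : ograph n), is_ograph E -> P n E ->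
     (sumn (drop k.+1 (block_seq E)) <= M)%N) ->
  exists C N : nat, forall n : nat, (N <= n)%N -> (#|Pn P n| <= C * n ^ k)%N.
Proof.
move=> _ blocksP; pose R := k.+2 * M; pose b := k.+1 + R.
pose c1 := 2 ^ (k.+2 * (R * b).*2.+1); pose c2 := 2 ^ 2 ^ b.*2.
exists (2 ^ k * c1 * c2), 1 => -[//|n] _.
set G := [set S : {set 'I_n.+1} | (#|S| <= b) && (#|free_starts S R| <= k)].
have card_encodings : #|Pn P n.+1| <= #|G| * c2.
  apply: (leq_card_pairs (h := @encode n) (Y := fun S => powerset (powerset (starts_succ S)))).
  - by move=> E1 E2; rewrite !inE => /andP[graph1 _] /andP[graph2 _]; apply: encode_inj.
  - move=> E; rewrite inE => /andP[graphE /(blocksP _ _ graphE) blocksE].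
    by rewrite !inE subsetIr card_block_starts ?card_free_starts.
  - move=> S; rewrite inE => /andP[Sb _]; rewrite !card_powerset !leq_exp2l //.
    by apply: leq_trans (card_starts_succ S) _; rewrite leq_double.
have exp_le e : n.+2 ^ e <= 2 ^ e * n.+1 ^ e.
  by rewrite -expnMn; elim: e => // e IH; rewrite !expnS; apply: leq_mul IH; lia.
have card_G : #|G| <= 2 ^ k * n.+1 ^ k * c1.
  by apply: leq_trans (card_start_sets n k R b) _; rewrite leq_mul2r exp_le orbT.
apply: leq_trans card_encodings _; apply: leq_trans (leq_mul card_G (leqnn c2)) _.
by apply: eq_leq; rewrite -!mulnA; congr (_ * _); rewrite mulnC -mulnA.
Qed.
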